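(* The 1s frequency of $\mathcal{W}^1_n$ and the 1s frequency of $\mathcal{B}_n(11)$ both tend to $\frac{2-\varphi}{3-\varphi}$ as $n\to\infty$, where $\varphi=\frac{1+\sqrt5}{2}$.
   Context: A binary word is $1$-decreasing if for every maximal run of $0$s, of length $a>0$, together with the (possibly empty) maximal run of $1$s immediately following it, of length $b$, one has $a>b$; $\mathcal{W}^1_n$ is the set of $1$-decreasing words of length $n$. $\mathcal{B}_n(11)$ is the set of binary words of length $n$ with no two consecutive $1$s. The 1s frequency of a finite set of binary words is the total number of occurrences of $1$ in all words of the set divided by the total number of letters in all words of the set. *)

From HB Require Import structures.
From mathcomp Require Import all_boot all_order all_algebra.
From mathcomp Require Import reals topology normedtype sequences.
Set Implicit Arguments. Unset Strict Implicit. Unset Printing Implicit Defensive.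
Import Order.TTheory GRing.Theory Num.Theory.
Local Open Scope ring_scope.

(* Binary words are sequences of booleans: false = letter 0, true = letter 1. *)

Fixpoint rle (s : seq bool) : seq (bool * nat) :=
  match s with
  | [::] => [::]
  | x :: s' =>
      match rle s' with
      | (y, k) :: r => if x == y then (y, k.+1) :: r else (x, 1%N) :: (y, k) :: r
      | [::] => [:: (x, 1%N)]
      end
  end.

(* For every maximal run of 0s of length a, followed by the (possibly empty)
   maximal run of 1s of length b, we have a > b. If the 0-run is not followed by
   a 1-run, then b = 0 and a > 0 holds trivially. *)
Fixpoint runs_1dec (r : seq (bool * nat)) : bool :=
  match r with
  | [::] => true
  | (false, a) :: (((true, b) :: _) as r') => ((b < a)%N) && runs_1dec r'
  | _ :: r' => runs_1dec r'
  end.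

Definition one_decreasing (w : seq bool) : bool := runs_1dec (rle w).

Definition no11 (w : seq bool) : bool := ~~ infix [:: true; true] w.

Definition ones_freq (R : realType) (P : seq bool -> bool) (n : nat) : R :=
  ((\sum_(w : n.-tuple bool | P w) count_mem true w)%N)%:R
  / ((\sum_(w : n.-tuple bool | P w) n)%N)%:R.

Definition golden (R : realType) : R := (1 + Num.sqrt 5) / 2.

(* The word 1s is 1-decreasing iff s is, and 01s never is. For the words
   00s, write s = 0^a 1^b t with maximal runs: an involution of the pairs
   (a, b) preserving a + b, which exchanges (0, b) for b >= 2 with
   (floor(b/2), ceil(b/2)), maps the condition "a = 0 or b < a" (s is
   1-decreasing) onto "b < a + 2" (00s is). So 1-decreasing words, like words
   avoiding 11, are counted by F_(n+2). Tracking the 1s through the same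
   recursions (the involution loses floor(b/2) of them on a leading run 1^b,
   a quantity that is again of Fibonacci type) gives
   5 ones(n) = n (2 F_n + F_(n+1)) + 2 F_n + e_n with 0 <= e_n <= 5 F_(n+1).
   With q = phi - 1 one has F_(n+1) - q F_(n+2) = (-q)^n (1 - q), so the
   frequency ones(n) / (n F_(n+2)) is (2 - q) / 5 + O(q^n + 1/n), and
   (2 - q) / 5 = (2 - phi) / (3 - phi). *)

From mathcomp Require Import all_boot all_order all_algebra.
From mathcomp Require Import reals topology normedtype sequences.
From mathcomp Require Import zify lra ring.

Set Implicit Arguments.
Unset Strict Implicit.
Unset Printing Implicit Defensive.

Import Order.TTheory GRing.Theory Num.Theory.

Lemma mem_map_cons (T : eqType) (x y : T) s (W : seq (seq T)) :
  (y :: s \in map (cons x) W) = (y == x) && (s \in W).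
Proof.
by apply/mapP/andP => [[t tW [-> ->]] | [/eqP -> sW]]; [ | exists s].
Qed.

Fixpoint words (n : nat) : seq (seq bool) :=
  if n is m.+1 then map (cons false) (words m) ++ map (cons true) (words m)
  else [:: [::]].

Lemma mem_words n s : (s \in words n) = (size s == n).
Proof.
elim: n s => [|n IHn] [|x s] //=; rewrite mem_cat.
  by apply/negbTE/negP => /orP[] /mapP[].
by rewrite !mem_map_cons IHn eqSS; case: x; rewrite ?orbF.
Qed.

Lemma uniq_words n : uniq (words n).
Proof.
have cons_inj (x : bool) : injective (cons x) by move=> s t [].
elim: n => //= n IHn; rewrite cat_uniq !map_inj_uniq ?IHn //=.
by rewrite andbT; apply/hasPn => _ /mapP[s _ ->]; rewrite mem_map_cons.
Qed.

Lemma big_tuple_words (R : Type) (idx : R) (op : Monoid.com_law idx) n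
    (P : pred (seq bool)) (F : seq bool -> R) :
  \big[op/idx]_(w : n.-tuple bool | P w) F w = \big[op/idx]_(s <- words n | P s) F s.
Proof.
rewrite -(big_map val P F); apply/perm_big/uniq_perm.
- by rewrite map_inj_uniq ?index_enum_uniq //; exact: val_inj.
- exact: uniq_words.
move=> s; rewrite mem_words; apply/mapP/idP => [[w _ ->]|/eqP sz_s].
  by rewrite size_tuple.
by exists (Tuple (introT eqP sz_s)); rewrite ?mem_index_enum.
Qed.

Lemma big_words_S n (P : pred (seq bool)) (F : seq bool -> nat) :
  \sum_(s <- words n.+1 | P s) F s =
  \sum_(s <- words n | P (false :: s)) F (false :: s) +
  \sum_(s <- words n | P (true :: s)) F (true :: s).
Proof. by rewrite big_cat !big_map. Qed.

Lemma perm_words_involutive n (f : seq bool -> seq bool) :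
  involutive f -> (forall s, size (f s) = size s) -> perm_eq (map f (words n)) (words n).
Proof.
move=> fK size_f; apply: uniq_perm; rewrite ?map_inj_uniq ?uniq_words //; first exact: inv_inj.
move=> s; rewrite mem_words; apply/mapP/idP => [[t t_n ->]|s_n].
  by rewrite size_f -mem_words.
by exists (f s); rewrite ?fK // mem_words size_f.
Qed.

Fixpoint lead_run (x : bool) (s : seq bool) : nat :=
  if s is y :: s' then (if y == x then (lead_run x s').+1 else 0) else 0.

Lemma lead_run_nseq_cat x a u : lead_run x (nseq a x ++ u) = a + lead_run x u.
Proof. by elim: a => //= a ->; rewrite eqxx. Qed.

Lemma lead_run0 x s : head (~~ x) s != x -> lead_run x s = 0.
Proof. by case: s => //= y s; case: eqP. Qed.

Lemma lead_runK x s : nseq (lead_run x s) x ++ drop (lead_run x s) s = s.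
Proof. by elim: s => //= y s IHs; case: eqP => [->|_] /=; rewrite ?IHs ?drop0. Qed.

Lemma head_drop_lead_run x s : head (~~ x) (drop (lead_run x s) s) != x.
Proof. by elim: s => [|y s IHs] /=; [case: x | case: ifP => [/eqP -> | /negbT]]. Qed.

Definition block (ab : nat * nat) (t : seq bool) : seq bool :=
  nseq ab.1 false ++ nseq ab.2 true ++ t.

(* The runs 0^a and 1^b of [block (a, b) t] are maximal: t does not start
   with 1, nor with 0 after an empty 1-run. *)
Definition block_boundary (b : nat) (t : seq bool) : bool :=
  ~~ head false t && ((0 < b) || (t == [::])).

Definition block_split (s : seq bool) : nat * nat * seq bool :=
  let a := lead_run false s in
  let r := drop a s in
  let b := lead_run true r in ((a, b), drop b r).

Lemma block_splitK s : block (block_split s).1 (block_split s).2 = s.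
Proof. by rewrite /block /= !lead_runK. Qed.

Lemma block_split_boundary s : block_boundary (block_split s).1.2 (block_split s).2.
Proof.
rewrite /block_boundary /=; have := head_drop_lead_run true (drop (lead_run false s) s).
rewrite eqb_id => -> /=; have := head_drop_lead_run false s.
by case: (drop _ s) => [|[] r].
Qed.

Lemma block_splitE ab t : block_boundary ab.2 t -> block_split (block ab t) = (ab, t).
Proof.
case: ab => a b /andP[t_head b_t]; rewrite /block_split /block /=.
have t_run0 : lead_run true t = 0 by apply: lead_run0; rewrite eqb_id.
have a_run : lead_run false (nseq a false ++ nseq b true ++ t) = a.
  rewrite lead_run_nseq_cat; case: b b_t => [/eqP -> | b _] //=; lia.
by rewrite a_run drop_size_cat ?size_nseq // lead_run_nseq_cat t_run0 addn0
  drop_size_cat ?size_nseq.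
Qed.

Lemma block_ind (P : seq bool -> Prop) :
  (forall ab t, block_boundary ab.2 t -> P (block ab t)) -> forall s, P s.
Proof. by move=> P_block s; rewrite -(block_splitK s); apply/P_block/block_split_boundary. Qed.

Lemma rle_cons x s : exists k r, rle (x :: s) = (x, k.+1) :: r.
Proof.
rewrite /=; case: (rle s) => [|[y k] r]; first by exists 0, [::].
by case: eqP => [->|_]; [exists k, r | exists 0, ((y, k) :: r)].
Qed.

Lemma rle_nseq_cat x a u : 0 < a -> head (~~ x) u != x ->
  rle (nseq a x ++ u) = (x, a) :: rle u.
Proof.
move=> + u_head; elim: a => // -[_ _ | a IHa _].
  case: u u_head => [|y u] //= y_x; have [k [r]] := rle_cons y u.
  by rewrite /= => ->; rewrite eq_sym (negbTE y_x).
change (rle (x :: (nseq a.+1 x ++ u)) = (x, a.+2) :: rle u).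
by move: (nseq _ _ ++ u) (IHa isT) => s /= ->; rewrite eqxx.
Qed.

Lemma one_decreasing_block ab t : block_boundary ab.2 t ->
  one_decreasing (block ab t) = ((ab.1 == 0) || (ab.2 < ab.1)) && one_decreasing t.
Proof.
case: ab => a b /andP[t_head b_t]; rewrite /one_decreasing /block /=.
case: b b_t => [/eqP -> | b _]; first by case: a => // a; rewrite rle_nseq_cat.
have rle_bt : rle (nseq b.+1 true ++ t) = (true, b.+1) :: rle t.
  by rewrite rle_nseq_cat ?eqb_id.
case: a => [|a]; first by rewrite cat0s rle_bt.
by rewrite rle_nseq_cat // rle_bt.
Qed.

Definition rebalance (ab : nat * nat) : nat * nat :=
  let: (a, b) := ab in
  if (a == 0) && (1 < b) then (b./2, b - b./2)
  else if (0 < a) && (a <= b <= a.+1) then (0, a + b)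
  else (a, b).

Ltac case_rebalance := rewrite /rebalance; repeat (case: ifP => /= ?); try congr pair; lia.

Lemma rebalanceK : involutive rebalance.
Proof. by case=> a b; case_rebalance. Qed.

Lemma rebalance_sum ab : (rebalance ab).1 + (rebalance ab).2 = ab.1 + ab.2.
Proof. by case: ab => a b; case_rebalance. Qed.

Lemma rebalance_eq0 ab : ((rebalance ab).2 == 0) = (ab.2 == 0).
Proof. by case: ab => a b; case_rebalance. Qed.

Lemma rebalance_lt ab :
  ((rebalance ab).2 < (rebalance ab).1.+2) = ((ab.1 == 0) || (ab.2 < ab.1)).
Proof. by case: ab => a b; case_rebalance. Qed.

Lemma rebalance_ones ab : (ab.1 == 0) || (ab.2 < ab.1) ->
  (rebalance ab).2 + (if ab.1 == 0 then ab.2 else 0)./2 = ab.2.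
Proof. by case: ab => a b; case_rebalance. Qed.

Lemma rebalance_boundary ab t :
  block_boundary ab.2 t -> block_boundary (rebalance ab).2 t.
Proof. by rewrite /block_boundary !lt0n rebalance_eq0. Qed.

Definition rebalance_word (s : seq bool) : seq bool :=
  block (rebalance (block_split s).1) (block_split s).2.

Lemma rebalance_word_block ab t :
  block_boundary ab.2 t -> rebalance_word (block ab t) = block (rebalance ab) t.
Proof. by move=> abt; rewrite /rebalance_word block_splitE. Qed.

Lemma rebalance_wordK : involutive rebalance_word.
Proof.
elim/block_ind=> ab t abt.
by rewrite !rebalance_word_block ?rebalance_boundary // rebalanceK.
Qed.

Lemma size_rebalance_word s : size (rebalance_word s) = size s.
Proof.
elim/block_ind: s => ab t abt; rewrite rebalance_word_block //.
by rewrite !size_cat !size_nseq !addnA rebalance_sum.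
Qed.

Lemma one_decreasing_00_rebalance s :
  one_decreasing [:: false, false & rebalance_word s] = one_decreasing s.
Proof.
elim/block_ind: s => ab t abt; rewrite rebalance_word_block //.
rewrite -[[:: _, _ & _]]/(block ((rebalance ab).1.+2, (rebalance ab).2) t).
by rewrite !one_decreasing_block ?rebalance_boundary //= rebalance_lt.
Qed.

Lemma count_block ab t : count_mem true (block ab t) = ab.2 + count_mem true t.
Proof. by rewrite !count_cat !count_nseq /= mul0n mul1n. Qed.

Lemma lead_run_block ab t : block_boundary ab.2 t ->
  lead_run true (block ab t) = if ab.1 == 0 then ab.2 else 0.
Proof.
case: ab => [[|a] b] /andP[t_head _] //=.
by rewrite lead_run_nseq_cat lead_run0 ?addn0 ?eqb_id.
Qed.

Lemma count_rebalance_word s : one_decreasing s ->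
  count_mem true (rebalance_word s) + (lead_run true s)./2 = count_mem true s.
Proof.
elim/block_ind: s => ab t abt; rewrite one_decreasing_block // => /andP[ab_dec _].
by rewrite rebalance_word_block // lead_run_block // !count_block addnAC rebalance_ones.
Qed.

Lemma one_decreasing_cons1 s : one_decreasing (true :: s) = one_decreasing s.
Proof.
elim/block_ind: s => -[[|a] b] t abt.
  rewrite -[true :: _]/(block (0, b.+1) t) !one_decreasing_block //.
  by case/andP: abt => t_head _; rewrite /block_boundary t_head.
by rewrite -[true :: _]/(block (0, 1) (block (a.+1, b) t)) one_decreasing_block.
Qed.

Lemma one_decreasing_01 s : one_decreasing [:: false, true & s] = false.
Proof.
rewrite /one_decreasing (@rle_nseq_cat false 1 (true :: s)) //.
by have [k [r ->]] := rle_cons true s.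
Qed.

Lemma no11_cons0 s : no11 (false :: s) = no11 s.
Proof. by rewrite /no11 infix_consl !prefix_cons. Qed.

Lemma no11_10 s : no11 [:: true, false & s] = no11 s.
Proof. by rewrite /no11 !infix_consl. Qed.

Lemma no11_11 s : no11 [:: true, true & s] = false.
Proof. by rewrite /no11 infix_consl !prefix_cons prefix0s. Qed.

Definition nwords (P : pred (seq bool)) (n : nat) : nat :=
  \sum_(s <- words n | P s) 1.
Definition nones (P : pred (seq bool)) (n : nat) : nat :=
  \sum_(s <- words n | P s) count_mem true s.
Definition half_lead_ones (n : nat) : nat :=
  \sum_(s <- words n | one_decreasing s) (lead_run true s)./2.

Lemma big_words_00 n (F : seq bool -> nat) :
  \sum_(s <- words n | one_decreasing [:: false, false & s]) F s =
  \sum_(s <- words n | one_decreasing s) F (rebalance_word s).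
Proof.
have perm_rw := perm_words_involutive n rebalance_wordK size_rebalance_word.
rewrite -(perm_big _ perm_rw) big_map.
by apply: eq_bigl => s; rewrite one_decreasing_00_rebalance.
Qed.

Lemma big_words_01 n (F : seq bool -> nat) :
  \sum_(s <- words n | one_decreasing [:: false, true & s]) F s = 0.
Proof. by rewrite big_pred0 // => s; rewrite one_decreasing_01. Qed.

Lemma big_words_cons1 n (F : seq bool -> nat) :
  \sum_(s <- words n | one_decreasing (true :: s)) F s =
  \sum_(s <- words n | one_decreasing s) F s.
Proof. by apply: eq_bigl => s; rewrite one_decreasing_cons1. Qed.

Lemma nwords_one_decreasing_rec n :
  nwords one_decreasing n.+2 = nwords one_decreasing n.+1 + nwords one_decreasing n.
Proof.
by rewrite /nwords big_words_S big_words_S big_words_01 big_words_00 big_words_cons1 addn0 addnC.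
Qed.

Lemma nones_one_decreasing_rec n :
  nones one_decreasing n.+2 + half_lead_ones n =
  nones one_decreasing n.+1 + nwords one_decreasing n.+1 + nones one_decreasing n.
Proof.
have ones_1s : \sum_(s <- words n.+1 | one_decreasing (true :: s)) count_mem true (true :: s)
    = nones one_decreasing n.+1 + nwords one_decreasing n.+1.
  by rewrite big_words_cons1 /nones /nwords -big_split; apply: eq_bigr => s _; rewrite /= addnC.
have ones_00s :
    \sum_(s <- words n | one_decreasing [:: false, false & s])
      count_mem true [:: false, false & s] + half_lead_ones n = nones one_decreasing n.
  by rewrite big_words_00 -big_split; apply: eq_bigr => s; apply: count_rebalance_word.
by rewrite {1}/nones big_words_S big_words_S big_words_01 ones_1s -ones_00s; lia.
Qed.

Lemma half_lead_ones_rec n :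
  half_lead_ones n.+2 = half_lead_ones n + nwords one_decreasing n.
Proof.
rewrite /half_lead_ones big_words_S big1 // add0n big_words_S big1 // add0n.
rewrite /nwords -big_split; apply: eq_big => [s | s _ /=]; first by rewrite !one_decreasing_cons1.
by rewrite addn1.
Qed.

Lemma nwords_no11_rec n : nwords no11 n.+2 = nwords no11 n.+1 + nwords no11 n.
Proof.
rewrite /nwords big_words_S [in X in _ + X]big_words_S.
rewrite [X in _ + (_ + X)]big_pred0 => [|s]; last by rewrite no11_11.
by rewrite addn0; congr addn; apply: eq_bigl => s; rewrite ?no11_cons0 ?no11_10.
Qed.

Lemma nones_no11_rec n :
  nones no11 n.+2 = nones no11 n.+1 + (nones no11 n + nwords no11 n).
Proof.
rewrite /nones big_words_S [in X in _ + X]big_words_S.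
rewrite [X in _ + (_ + X)]big_pred0 => [|s]; last by rewrite no11_11.
rewrite addn0; congr addn.
rewrite /nwords -big_split; apply: eq_big => [s | s _ /=]; first by rewrite no11_10.
by rewrite addnC.
Qed.

Fixpoint fib (n : nat) : nat :=
  if n is m.+1 then (if m is k.+1 then fib m + fib k else 1) else 0.

Lemma fibSS n : fib n.+2 = fib n.+1 + fib n.
Proof. by []. Qed.

Lemma fib_gt0 n : 0 < fib n.+1.
Proof. by elim: n => // n IHn; rewrite fibSS ltn_addr. Qed.

Lemma nat_ind2 (P : nat -> Prop) :
  P 0 -> P 1 -> (forall n, P n -> P n.+1 -> P n.+2) -> forall n, P n.
Proof.
move=> P0 P1 PSS n; suff [] : P n /\ P n.+1 by [].
by elim: n => // n [Pn Pn1]; split; last exact: PSS.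
Qed.

Lemma nwords_one_decreasing n : nwords one_decreasing n = fib n.+2.
Proof.
elim/nat_ind2: n => [||n IHn IHn1]; last by rewrite nwords_one_decreasing_rec IHn IHn1.
all: by rewrite /nwords /= !big_cons big_nil.
Qed.

Lemma half_lead_ones_fib n : half_lead_ones n + 1 = fib n.+1.
Proof.
elim/nat_ind2: n => [||n IHn _]; last first.
  by rewrite half_lead_ones_rec nwords_one_decreasing -addnA addnCA IHn.
all: by rewrite /half_lead_ones /= !big_cons big_nil.
Qed.

Lemma nones_one_decreasing n :
  5 * nones one_decreasing n + 5 = n * (2 * fib n + fib n.+1) + 2 * fib n + 5 * fib n.+1.
Proof.
elim/nat_ind2: n => [||n IHn IHn1]; last first.
  have := nones_one_decreasing_rec n; have := half_lead_ones_fib n.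
  by rewrite nwords_one_decreasing !fibSS in IHn1 * => H_n rec_n; nia.
all: by rewrite /nones /= !big_cons big_nil.
Qed.

Lemma nwords_no11 n : nwords no11 n = fib n.+2.
Proof.
elim/nat_ind2: n => [||n IHn IHn1]; last by rewrite nwords_no11_rec IHn IHn1.
all: by rewrite /nwords /= !big_cons big_nil.
Qed.

Lemma nones_no11 n : 5 * nones no11 n = n * (2 * fib n + fib n.+1) + 2 * fib n.
Proof.
elim/nat_ind2: n => [||n IHn IHn1]; last first.
  by have := nones_no11_rec n; rewrite nwords_no11 !fibSS in IHn1 * => rec_n; nia.
all: by rewrite /nones /= !big_cons big_nil.
Qed.

Local Open Scope ring_scope.
Import numFieldNormedType.Exports.
Local Open Scope classical_set_scope.

Lemma ones_freqE (R : realType) (P : pred (seq bool)) n :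
  ones_freq R P n = (nones P n)%:R / (n * nwords P n)%:R.
Proof.
rewrite /ones_freq !big_tuple_words /nones /nwords big_distrr /=.
by congr (_ / _%:R); apply: eq_bigr => s _; rewrite muln1.
Qed.

Lemma golden_sqr (R : realType) : golden R ^+ 2 = golden R + 1.
Proof.
have sqrt5_sqr : Num.sqrt 5 ^+ 2 = 5 :> R by rewrite sqr_sqrtr.
by rewrite /golden expr_div_n sqrrD sqrt5_sqr; field.
Qed.

Lemma golden_bounds (R : realType) : 1 < golden R < 2.
Proof.
have sqrt5_sqr : Num.sqrt 5 ^+ 2 = 5 :> R by rewrite sqr_sqrtr.
have sqrt5_ge0 : 0 <= Num.sqrt 5 :> R by exact: sqrtr_ge0.
rewrite /golden expr2 in sqrt5_sqr *; apply/andP; split; nra.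
Qed.

Lemma golden_subr1_sqr (R : realType) : (golden R - 1) ^+ 2 = 1 - (golden R - 1).
Proof. by rewrite sqrrB1 golden_sqr mulr2n; ring. Qed.

Lemma golden_limitE (R : realType) :
  (2 - golden R) / (3 - golden R) = (2 - (golden R - 1)) / 5.
Proof.
have /andP[_ golden_lt2] := golden_bounds R.
have golden3 : 3 - golden R != 0 by rewrite subr_eq0 gt_eqF //; lra.
have -> : 2 - golden R = (3 - golden R) ^+ 2 / 5.
  by rewrite sqrrB golden_sqr mulr2n; field.
by field.
Qed.

Lemma fib_binet (R : comPzRingType) (q : R) n : q ^+ 2 = 1 - q ->
  (fib n.+1)%:R - q * (fib n.+2)%:R = (- q) ^+ n * (1 - q).
Proof.
move=> q_sqr; elim: n => [|n IHn]; first by rewrite expr0 mul1r mulr1.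
rewrite exprS -mulrA -IHn !fibSS !natrD.
set a := (fib n.+1)%:R; set b := (fib n)%:R.
have -> : - q * (a - q * (a + b)) = - q * a + q ^+ 2 * (a + b) by ring.
by rewrite q_sqr; ring.
Qed.

Lemma ratio_dist_le (R : realFieldType) (q x y o e m : R) :
  0 <= x -> 1 <= x + y -> 0 < m -> 0 <= e <= 5 * y ->
  5 * o = m * (2 * x + y) + 2 * x + e ->
  `|o / (m * (x + y)) - (2 - q) / 5| <= `|y - q * (x + y)| + m^-1.
Proof.
move=> x_ge0 c_ge1 m_gt0 /andP[e_ge0 e_le] o_eq.
have c_gt0 : 0 < x + y by lra.
have -> : o / (m * (x + y)) - (2 - q) / 5 =
    - ((y - q * (x + y)) / (5 * (x + y))) + (2 * x + e) / (5 * (m * (x + y))).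
  have -> : o = (m * (2 * x + y) + 2 * x + e) / 5 by rewrite -o_eq; field.
  by field; rewrite !gt_eqF ?mulr_gt0.
apply: le_trans (ler_normD _ _) _; rewrite normrN; apply: lerD.
  rewrite normrM normfV (ger0_norm (_ : 0 <= 5 * (x + y))); last lra.
  by rewrite ler_pdivrMr ?ler_peMr //; lra.
have num_ge0 : 0 <= 2 * x + e by lra.
rewrite ger0_norm ?divr_ge0 ?mulr_ge0 ?(ltW m_gt0) ?(ltW c_gt0) //.
by rewrite ler_pdivrMr ?mulr_gt0 // mulrCA mulKf ?gt_eqF //; lra.
Qed.

Lemma ones_freq_dist_le (R : realType) (P : pred (seq bool)) (e : nat -> nat) (q : R) n :
  q ^+ 2 = 1 - q -> 0 <= q -> (0 < n)%N ->
  nwords P n = fib n.+2 ->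
  (5 * nones P n = n * (2 * fib n + fib n.+1) + 2 * fib n + e n)%N ->
  (e n <= 5 * fib n.+1)%N ->
  `|ones_freq R P n - (2 - q) / 5| <= q ^+ n + n%:R^-1.
Proof.
move=> q_sqr q_ge0 n_gt0 nwordsE nonesE e_le.
rewrite ones_freqE nwordsE fibSS [(_ + _)%N]addnC natrM natrD.
apply: le_trans (@ratio_dist_le _ q _ _ _ (e n)%:R _ _ _ _ _ _) _.
- exact: ler0n.
- by rewrite -natrD ler1n addn_gt0 fib_gt0 orbT.
- by rewrite ltr0n.
- by rewrite ler0n /= -natrM ler_nat.
- by rewrite -natrM nonesE; ring.
have q_le1 : q <= 1 by rewrite -subr_ge0 -q_sqr sqr_ge0.
rewrite lerD2r -natrD addnC -fibSS fib_binet // normrM normrX normrN.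
rewrite (ger0_norm q_ge0) (ger0_norm (_ : 0 <= 1 - q)) ?subr_ge0 //.
by rewrite ler_piMr ?exprn_ge0 // lerBlDr lerDl.
Qed.

Lemma cvgr_dist_le_cvg0 (R : realFieldType) (u v : nat -> R) (l : R) :
  (\forall n \near \oo, `|u n - l| <= v n) -> v @ \oo --> 0 -> u @ \oo --> l.
Proof.
move=> u_v /cvgr0_norm_lt v0; apply/cvgrPdistC_lt => e e_gt0.
near=> n; have vn_lt_e : `|v n| < e by near: n; exact: v0.
have : `|u n - l| <= v n by near: n.
by move/le_lt_trans; apply; apply: le_lt_trans vn_lt_e; exact: ler_norm.
Unshelve. all: by end_near.
Qed.

Lemma cvg_expr_add_invn (R : realType) (q : R) : 0 <= q < 1 ->
  (q ^+ n + n%:R^-1) @[n --> \oo] --> 0.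
Proof.
case/andP=> q_ge0 q_lt1; rewrite -[0]addr0; apply: cvgD.
  by apply: cvg_expr; rewrite ger0_norm.
rewrite gtr0_cvgV0; first exact: cvgr_idn.
by near=> n; rewrite ltr0n; near: n; exact: nbhs_infty_gt.
Unshelve. all: by end_near.
Qed.

Lemma ones_freq_cvg (R : realType) (P : pred (seq bool)) (e : nat -> nat) :
  (forall n, nwords P n = fib n.+2) ->
  (forall n, 5 * nones P n = n * (2 * fib n + fib n.+1) + 2 * fib n + e n)%N ->
  (forall n, e n <= 5 * fib n.+1)%N ->
  ones_freq R P @ \oo --> (2 - golden R) / (3 - golden R).
Proof.
move=> nwordsE nonesE e_le; rewrite golden_limitE.
have /andP[golden_gt1 golden_lt2] := golden_bounds R.
have q_bounds : 0 <= golden R - 1 < 1 by apply/andP; split; lra.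
apply: cvgr_dist_le_cvg0 (cvg_expr_add_invn q_bounds).
near=> n; apply: ones_freq_dist_le => //.
- exact: golden_subr1_sqr.
- by rewrite subr_ge0 ltW.
- by near: n; exact: nbhs_infty_gt.
Unshelve. all: by end_near.
Qed.

Theorem corollary4 (R : realType) :
  (ones_freq R one_decreasing @ \oo -->
     (2 - golden R) / (3 - golden R)) /\
  (ones_freq R no11 @ \oo -->
     (2 - golden R) / (3 - golden R)).
Proof.
split.
- apply: (@ones_freq_cvg _ _ (fun n => 5 * fib n.+1 - 5)%N) => n.
  + exact: nwords_one_decreasing.
  + by have := nones_one_decreasing n; have := fib_gt0 n; lia.
  + exact: leq_subr.
- apply: (@ones_freq_cvg _ _ (fun=> 0)%N) => n //.
  + exact: nwords_no11.
  + by rewrite addn0 nones_no11.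
Qed.
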